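(* If $(\Omega,\mathcal F,\mathcal P)$ is pre-Hahn-localizable with a localization whose supports are pairwise disjoint, then $(\Omega,\mathcal F,\mathcal P)$ has the Hahn property.
   Context: $\mathcal P$ is a family of probability measures on $\mathcal F$. $\mathcal A\lll\mathcal B$ means every $A\in\mathcal A$ is absolutely continuous w.r.t. some $B\in\mathcal B$; $\mathrm{sconv}$ denotes countable convex combinations. $\mathcal P$ is pre-Hahn-localizable with localization $\mathcal Q$ (probability measures on $\mathcal F$) and supports $S_Q\in\mathcal F$ if $Q(S_R)=\delta_{QR}$ for $Q,R\in\mathcal Q$ and $\mathcal Q\lll\mathcal P\lll\mathrm{sconv}(\mathcal Q)$. For a family $\mathcal R$, $\mathcal F^{\mathcal R}=\bigcap_{R\in\mathcal R}\{F\cup Z:F\in\mathcal F,Z\subseteq N\in\mathcal F,R(N)=0\}$. $\mathcal P$ has the Hahn property if there is a family $\mathcal R$ of probability measures on $\mathcal F^{\mathcal P}$ such that (1) $\mathcal P$ and $\{R|_{\mathcal F}:R\in\mathcal R\}$ have the same polar (null-contained) sets and the $\mathcal F^{\mathcal P}$-measurable and $\mathcal F^{\mathcal R}$-measurable real functions coincide; (2) for every $R\in\mathcal R$ there is $W_R\in\mathcal F^{\mathcal P}$ with $R(W_R)=1$, the sets $W_R$ being pairwise disjoint; (3) for all $F\in\mathcal F$ and $P\in\mathcal P$, if $P(F\cap W_R)=0$ for all $R\in\mathcal R$ then $P(F)=0$. *)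

From mathcomp Require Import all_boot all_order all_algebra.
From mathcomp Require Import all_classical all_reals all_analysis.
Set Implicit Arguments. Unset Strict Implicit. Unset Printing Implicit Defensive.
Import Order.TTheory GRing.Theory Num.Theory.
Import numFieldNormedType.Exports.
Local Open Scope classical_set_scope.
Local Open Scope ring_scope.

(* A "measure" is represented by a function [set T -> R]; a probability
   measure on a sigma-algebra G is such a function that is a countably
   additive probability on G and (canonical representation) vanishes off G,
   so that two probability measures on G are equal iff they agree on G. *)
Section Defs.
Variables (T : Type) (R : realType).

Definition is_prob (G : set (set T)) (mu : set T -> R) : Prop :=
  [/\ (forall A, ~ G A -> mu A = 0),
      (forall A, G A -> 0 <= mu A),
      mu setT = 1 &
      (forall A : nat -> set T, (forall n, G (A n)) -> trivIset setT A ->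
         (fun n => \sum_(0 <= i < n) mu (A i)) @ \oo --> mu (\bigcup_n A n))].

Definition abs_cont (G : set (set T)) (mu nu : set T -> R) : Prop :=
  forall A, G A -> nu A = 0 -> mu A = 0.

Definition lll (G : set (set T)) (A B : set (set T -> R)) : Prop :=
  forall a, A a -> exists2 b, B b & abs_cont G a b.

Definition sconv (G : set (set T)) (Q : set (set T -> R)) : set (set T -> R) :=
  [set mu | (forall A, ~ G A -> mu A = 0) /\
    exists (c : nat -> R) (q : nat -> (set T -> R)),
      [/\ (forall n, 0 <= c n), (forall n, Q (q n)),
          (fun n => \sum_(0 <= i < n) c i) @ \oo --> (1 : R) &
          (forall A, G A ->
             (fun n => \sum_(0 <= i < n) c i * q i A) @ \oo --> mu A)]].

Definition pre_hahn_localization (G : set (set T)) (P Q : set (set T -> R))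
    (S : (set T -> R) -> set T) : Prop :=
  [/\ (forall q, Q q -> is_prob G q),
      (forall q, Q q -> G (S q)),
      (forall q r, Q q -> Q r -> q (S r) = if `[< q = r >] then 1 else 0),
      lll G Q P &
      lll G P (sconv G Q)].

Definition completion (G : set (set T)) (mu : set T -> R) : set (set T) :=
  [set A | exists B N Z, [/\ G B, G N, mu N = 0, Z `<=` N & A = B `|` Z]].

Definition completion_fam (G : set (set T)) (Rf : set (set T -> R))
  : set (set T) :=
  [set A | forall mu, Rf mu -> completion G mu A].

Definition completed_value (G : set (set T)) (mu : set T -> R) (A : set T)
    (v : R) : Prop :=
  exists B N Z, [/\ G B, G N, mu N = 0, Z `<=` N & A = B `|` Z] /\ mu B = v.

Definition polar (G : set (set T)) (Pf : set (set T -> R)) : set (set T) :=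
  [set A | exists N, [/\ G N, A `<=` N & forall mu, Pf mu -> mu N = 0]].

Definition restr (G : set (set T)) (mu : set T -> R) : set T -> R :=
  fun A => if `[< G A >] then mu A else 0.

Definition meas_fun (G : set (set T)) (f : T -> R) : Prop :=
  forall B : set R, measurable B -> G (f @^-1` B).

Definition hahn_property (G : set (set T)) (Pf : set (set T -> R)) : Prop :=
  let GP := completion_fam G Pf in
  exists (Rf : set (set T -> R)) (W : (set T -> R) -> set T),
    [/\ (forall r, Rf r -> is_prob GP r),
        polar G Pf = polar G (restr G @` Rf) /\
        (forall f : T -> R, meas_fun GP f <-> meas_fun (completion_fam G Rf) f),
        (forall r, Rf r -> GP (W r) /\ r (W r) = 1) /\
        (forall r r', Rf r -> Rf r' -> r <> r' -> W r `&` W r' = set0) &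
        (forall A mu, G A -> Pf mu ->
           (forall r, Rf r -> completed_value G mu (A `&` W r) 0) ->
           mu A = 0)].
End Defs.

From mathcomp Require Import all_boot all_order all_algebra.
From mathcomp Require Import all_classical all_reals all_analysis.
Set Implicit Arguments. Unset Strict Implicit. Unset Printing Implicit Defensive.
Import Order.TTheory GRing.Theory Num.Theory.
Import numFieldNormedType.Exports.
Local Open Scope classical_set_scope.
Local Open Scope ring_scope.

(* Each q in Q is absolutely continuous w.r.t. some p in P, so the completion
   of F w.r.t. P lies inside the q-completion and q extends to it; these
   extensions form the family R, with W = S_q for the extension of q, and the
   supports being disjoint makes the W disjoint.  Conversely each p in P is
   absolutely continuous w.r.t. a countable convex combination of members q_i
   of Q, so it vanishes wherever all the q_i do.  Hence P and Q have the same
   null sets, so the same polar sets and the same completions.  Finally, if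
   p(A ∩ S_q) = 0 for all q, then A is p-null, because A \ ⋃_i S_{q_i} is
   q_i-null for every i, as q_i(S_{q_i}) = 1. *)

Section sigma_algebra_closure.
Variables (T : Type) (F : set (set T)).
Hypothesis hF : sigma_algebra setT F.

Lemma sa_set0 : F set0. Proof. by case: hF. Qed.

Lemma sa_setC A : F A -> F (~` A).
Proof. exact: dynkinC (sigma_algebra_dynkin hF) A. Qed.

Lemma sa_setT : F setT. Proof. exact: dynkinT (sigma_algebra_dynkin hF). Qed.

Lemma sa_bigcup (A : nat -> set T) : (forall n, F (A n)) -> F (\bigcup_n A n).
Proof. by case: hF => _ _; apply. Qed.

Lemma sa_setU A B : F A -> F B -> F (A `|` B).
Proof.
move=> FA FB; rewrite -bigcup2E; apply: sa_bigcup => -[|[|n]] //=.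
exact: sa_set0.
Qed.

Lemma sa_setI A B : F A -> F B -> F (A `&` B).
Proof.
move=> FA FB; rewrite -[_ `&` _]setCK setCI.
by apply/sa_setC/sa_setU; apply: sa_setC.
Qed.

Lemma sa_setD A B : F A -> F B -> F (A `\` B).
Proof. by move=> FA FB; apply: sa_setI => //; apply: sa_setC. Qed.

Lemma sa_bigcap (A : nat -> set T) : (forall n, F (A n)) -> F (\bigcap_n A n).
Proof.
move=> FA; rewrite -[\bigcap_n _]setCK setC_bigcap.
by apply/sa_setC/sa_bigcup => n; apply: sa_setC.
Qed.

Lemma sa_seqDU (A : nat -> set T) :
  (forall n, F (A n)) -> forall n, F (seqDU A n).
Proof.
move=> FA n; apply: sa_setD => //; elim: n => [|n ih].
  by rewrite big_ord0; exact: sa_set0.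
by rewrite big_ord_recr; apply: sa_setU.
Qed.

End sigma_algebra_closure.

Lemma lim_partial_sums0 (R : realType) (u : nat -> R) (l : R) :
  (forall i, u i = 0) -> (fun n => \sum_(0 <= i < n) u i) @ \oo --> l -> l = 0.
Proof.
move=> u0; have -> : (fun n => \sum_(0 <= i < n) u i) = fun=> 0.
  by apply: funext => n; rewrite big1.
by move=> l_lim; exact: (cvg_unique _ l_lim (cvg_cst _)).
Qed.

Section probability.
Variables (T : Type) (R : realType) (F : set (set T)) (mu : set T -> R).
Hypotheses (hF : sigma_algebra setT F) (hmu : is_prob F mu).

Lemma prob_ge0 A : F A -> 0 <= mu A.
Proof. by case: hmu => _ + _ _; apply. Qed.

Lemma prob_sigma_additive (A : nat -> set T) : (forall n, F (A n)) ->
  trivIset setT A ->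
  (fun n => \sum_(0 <= i < n) mu (A i)) @ \oo --> mu (\bigcup_n A n).
Proof. by case: hmu => _ _ _; apply. Qed.

Lemma prob0 : mu set0 = 0.
Proof.
have triv0 : trivIset [set: nat] (fun=> set0 : set T).
  by move=> i j _ _ /=; rewrite setI0 => -[].
have := prob_sigma_additive (fun=> sa_set0 hF) triv0.
rewrite bigcup0 // => mu_cvg.
have /cvg_series_cvg_0 : cvgn (series (fun=> mu set0)) by apply/cvg_ex; exists (mu set0).
exact: cvg_unique (cvg_cst (mu set0)).
Qed.

Lemma probU A B : F A -> F B -> A `&` B = set0 -> mu (A `|` B) = mu A + mu B.
Proof.
move=> FA FB; rewrite trivIset_bigcup2 -bigcup2E => AB0.
have FAB n : F (bigcup2 A B n) by case: n => [|[|n]] //=; exact: sa_set0.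
have sums_AB : (fun n => \sum_(0 <= i < n) mu (bigcup2 A B i)) @ \oo --> mu A + mu B.
  apply: cvg_near_cst; exists 2%N => // n /= n_ge2.
  rewrite -(subnK n_ge2) addn2 !big_nat_recl //= big1 ?addr0 // => i _.
  exact: prob0.
exact: (cvg_unique _ (prob_sigma_additive FAB AB0) sums_AB).
Qed.

Lemma prob_le A B : F A -> F B -> A `<=` B -> mu A <= mu B.
Proof.
move=> FA FB AB; have FBA : F (B `\` A) by exact: sa_setD.
by rewrite -(setDUK AB) probU ?lerDl ?prob_ge0 ?setDIK.
Qed.

Lemma prob_null_sub A N : F A -> F N -> A `<=` N -> mu N = 0 -> mu A = 0.
Proof.
move=> FA FN AN N0; apply/eqP; rewrite eq_le prob_ge0 // andbT -N0.
exact: prob_le.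
Qed.

Lemma prob_setU_null A N : F A -> F N -> mu N = 0 -> mu (A `|` N) = mu A.
Proof.
move=> FA FN N0; have FNA : F (N `\` A) by exact: sa_setD.
rewrite -(setD0 (A `|` N)) -(setDv A) -setUDr probU ?setDIK //.
by rewrite (@prob_null_sub (N `\` A) N) ?addr0.
Qed.

Lemma prob_setC A : F A -> mu (~` A) = 1 - mu A.
Proof.
move=> FA; have FCA : F (~` A) by exact: sa_setC.
case: hmu => _ _ mu1 _.
by rewrite -mu1 -(setUv A) probU ?setICr // addrAC subrr add0r.
Qed.

Lemma prob_bigcup_null (N : nat -> set T) : (forall n, F (N n)) ->
  (forall n, mu (N n) = 0) -> mu (\bigcup_n N n) = 0.
Proof.
move=> FN N0; rewrite seqDU_bigcup_eq.
apply: lim_partial_sums0 (prob_sigma_additive (sa_seqDU hF FN) (trivIset_seqDU N)).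
by move=> n; apply: (prob_null_sub (sa_seqDU hF FN n) (FN n) (@subset_seqDU _ N n)).
Qed.

End probability.

Lemma eq_setU_subset_sandwich T (A B N : set T) :
  (exists2 Z, Z `<=` N & A = B `|` Z) <-> B `<=` A /\ A `<=` B `|` N.
Proof.
split=> [[Z ZN ->]|[BA ANB]]; first by split; [exact: subsetUl | exact: setUS].
exists (A `\` B); last by rewrite setDUK.
by move=> x [/ANB[]].
Qed.

Definition null_sandwich T (R : realType) (G : set (set T)) (mu : set T -> R)
    (B A N : set T) :=
  [/\ G B, G N, mu N = 0, B `<=` A & A `<=` B `|` N].

Lemma completionP T (R : realType) (G : set (set T)) (mu : set T -> R) A :
  completion G mu A <-> exists B N, null_sandwich G mu B A N.
Proof.
split=> [[B [N [Z [GB GN N0 ZN eqA]]]]|[B [N [GB GN N0 BA ANB]]]].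
  have [BA ANB] := (eq_setU_subset_sandwich A B N).1 (ex_intro2 _ _ Z ZN eqA).
  by exists B, N.
have [Z ZN eqA] := (eq_setU_subset_sandwich A B N).2 (conj BA ANB).
by exists B, N, Z.
Qed.

Lemma completed_valueP T (R : realType) (G : set (set T)) (mu : set T -> R) A v :
  completed_value G mu A v <-> exists B N, null_sandwich G mu B A N /\ mu B = v.
Proof.
split=> [[B [N [Z [[GB GN N0 ZN eqA] Bv]]]]|[B [N [[GB GN N0 BA ANB] Bv]]]].
  have [BA ANB] := (eq_setU_subset_sandwich A B N).1 (ex_intro2 _ _ Z ZN eqA).
  by exists B, N.
have [Z ZN eqA] := (eq_setU_subset_sandwich A B N).2 (conj BA ANB).
by exists B, N, Z.
Qed.

Lemma choice_null_sandwich T (R : realType) (G : set (set T))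
    (mu : nat -> set T -> R) (A : nat -> set T) :
  (forall n, completion G (mu n) (A n)) ->
  exists B N : nat -> set T, forall n, null_sandwich G (mu n) (B n) (A n) (N n).
Proof.
move=> complA.
have /choice[BN BNP] n : exists BN, null_sandwich G (mu n) BN.1 (A n) BN.2.
  by have /completionP[B [N ?]] := complA n; exists (B, N).
by exists (fst \o BN), (snd \o BN).
Qed.

Lemma eq_completion T (R : realType) (G : set (set T)) (mu nu : set T -> R) :
  (forall A, G A -> mu A = nu A) -> completion G mu = completion G nu.
Proof.
move=> eq_mu; apply/funext => A; apply/propext.
by split=> -[B [N [Z [GB GN N0 ZN ->]]]]; exists B, N, Z;
  split; rewrite ?eq_mu // -?eq_mu.
Qed.

Section completion.
Variables (T : Type) (R : realType) (G : set (set T)) (mu : set T -> R).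
Hypotheses (hG : sigma_algebra setT G) (hmu : is_prob G mu).

Lemma null_sandwich_bigcup (B A N : nat -> set T) :
  (forall n, null_sandwich G mu (B n) (A n) (N n)) ->
  null_sandwich G mu (\bigcup_n B n) (\bigcup_n A n) (\bigcup_n N n).
Proof.
move=> sandwich; split.
- by apply: (sa_bigcup hG) => n; case: (sandwich n).
- by apply: (sa_bigcup hG) => n; case: (sandwich n).
- by apply: (prob_bigcup_null hG hmu) => n; case: (sandwich n).
- by apply: subset_bigcup => n _; case: (sandwich n).
- rewrite -bigcupU; apply: subset_bigcup => n _; by case: (sandwich n).
Qed.

Lemma null_sandwich_refl A : G A -> null_sandwich G mu A A set0.
Proof. by split; rewrite ?setU0 //; [exact: sa_set0 hG | exact: prob0 hG hmu]. Qed.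

Lemma sub_completion A : G A -> completion G mu A.
Proof. by move=> GA; apply/completionP; exists A, set0; exact: null_sandwich_refl. Qed.

Lemma completion_bigcup (A : nat -> set T) :
  (forall n, completion G mu (A n)) -> completion G mu (\bigcup_n A n).
Proof.
move=> /(@choice_null_sandwich _ _ _ (fun=> mu))[B [N sandwich]].
apply/completionP; exists (\bigcup_n B n), (\bigcup_n N n).
exact: null_sandwich_bigcup.
Qed.

Lemma completion_setC A : completion G mu A -> completion G mu (~` A).
Proof.
move=> /completionP[B [N [GB GN N0 BA ANB]]]; apply/completionP.
exists (~` B `\` N), N; split => //.
- by apply: sa_setD => //; apply: sa_setC.
- by move=> x [nBx nNx] Ax; have [] := ANB x Ax.
- by move=> x nAx; have [Nx|nNx] := pselect (N x); [right | left; split => // /BA].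
Qed.

Lemma sigma_algebra_completion : sigma_algebra setT (completion G mu).
Proof.
split; first exact/sub_completion/(sa_set0 hG).
  by move=> A; rewrite setTD; exact: completion_setC.
exact: completion_bigcup.
Qed.

Lemma completed_value_unique A v w :
  completed_value G mu A v -> completed_value G mu A w -> v = w.
Proof.
suff le_val B1 N1 B2 N2 : null_sandwich G mu B1 A N1 ->
    null_sandwich G mu B2 A N2 -> mu B1 <= mu B2.
  move=> /completed_valueP[B1 [N1 [s1 <-]]] /completed_valueP[B2 [N2 [s2 <-]]].
  by apply/eqP; rewrite eq_le (le_val _ _ _ _ s1 s2) (le_val _ _ _ _ s2 s1).
move=> [GB1 _ _ B1A _] [GB2 GN2 N20 _ AB2].
rewrite -(prob_setU_null hG hmu GB2 GN2 N20).
by apply: (prob_le hG hmu) => //; [exact: sa_setU | exact: subset_trans AB2].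
Qed.

Lemma completed_value_meas A : G A -> completed_value G mu A (mu A).
Proof.
move=> GA; apply/completed_valueP; exists A, set0.
by split; first exact: null_sandwich_refl.
Qed.

Definition completed_measure (H : set (set T)) (A : set T) : R :=
  if `[< H A >] then xget 0 (completed_value G mu A) else 0.

Lemma completed_measureE H A v : H A -> completed_value G mu A v ->
  completed_measure H A = v.
Proof.
move=> HA Av; rewrite /completed_measure asboolT //.
by apply: xget_unique => // w /(completed_value_unique Av)->.
Qed.

Lemma completed_measure_sandwich H A B N : H A -> null_sandwich G mu B A N ->
  completed_measure H A = mu B.
Proof.
move=> HA sandwich; apply: completed_measureE => //.
by apply/completed_valueP; exists B, N.
Qed.

Section intermediate_sigma_algebra.
Variable H : set (set T).
Hypothesis GH : G `<=` H.

Lemma completed_measure_meas A : G A -> completed_measure H A = mu A.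
Proof.
by move=> GA; apply: completed_measureE; [exact: GH | exact: completed_value_meas].
Qed.

Lemma restr_completed_measure : restr G (completed_measure H) = mu.
Proof.
apply: funext => A; rewrite /restr; have [GA|nGA] := pselect (G A).
  by rewrite asboolT // completed_measure_meas.
by case: hmu => mu_out _ _ _; rewrite asboolF // mu_out.
Qed.

Lemma completion_completed_measure :
  completion G (completed_measure H) = completion G mu.
Proof. by apply: eq_completion => A /completed_measure_meas. Qed.

Hypotheses (hH : sigma_algebra setT H) (Hcompl : H `<=` completion G mu).

Lemma is_prob_completed_measure : is_prob H (completed_measure H).
Proof.
split.
- by move=> A nHA; rewrite /completed_measure asboolF.
- move=> A HA; have /completionP[B [N sandwich]] := Hcompl HA.
  by rewrite (completed_measure_sandwich HA sandwich) (prob_ge0 hmu); case: sandwich.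
- by rewrite completed_measure_meas; [case: hmu | exact: sa_setT].
move=> A HA trivA.
have [B [N sandwich]] := choice_null_sandwich (fun n => Hcompl (HA n)).
rewrite (completed_measure_sandwich (sa_bigcup hH HA) (null_sandwich_bigcup sandwich)).
under eq_fun => n do under eq_bigr => i _ do
  rewrite (completed_measure_sandwich (HA i) (sandwich i)).
apply: (prob_sigma_additive hmu) => [n|i j _ _ [x [Bix Bjx]]].
  by case: (sandwich n).
apply: trivA => //; exists x.
by case: (sandwich i) => _ _ _ /(_ x Bix) ? _; case: (sandwich j) => _ _ _ /(_ x Bjx).
Qed.

End intermediate_sigma_algebra.

End completion.

Lemma sigma_algebra_completion_fam T (R : realType) (G : set (set T))
    (Pf : set (set T -> R)) :
  sigma_algebra setT G -> (forall mu, Pf mu -> is_prob G mu) ->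
  sigma_algebra setT (completion_fam G Pf).
Proof.
move=> hG Pf_prob; apply: sigma_algebra_bigcap => mu Pf_mu.
exact: sigma_algebra_completion (Pf_prob _ Pf_mu).
Qed.

Lemma sub_completion_fam T (R : realType) (G : set (set T)) (Pf : set (set T -> R)) :
  sigma_algebra setT G -> (forall mu, Pf mu -> is_prob G mu) ->
  G `<=` completion_fam G Pf.
Proof. by move=> hG Pf_prob A GA mu /Pf_prob hmu; exact: (sub_completion hG hmu GA). Qed.

Lemma eq_polar T (R : realType) (G : set (set T)) (Pf1 Pf2 : set (set T -> R)) :
  (forall N, G N ->
     (forall mu, Pf1 mu -> mu N = 0) <-> (forall mu, Pf2 mu -> mu N = 0)) ->
  polar G Pf1 = polar G Pf2.
Proof.
move=> eq_null; apply/seteqP; split=> A [N [GN AN null]]; exists N; split => //.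
  exact/(eq_null N GN).1.
exact/(eq_null N GN).2.
Qed.

Section domination.
Variables (T : Type) (R : realType) (G : set (set T)).
Hypothesis hG : sigma_algebra setT G.

Definition dominated (mu : set T -> R) (qs : nat -> set T -> R) :=
  forall N, G N -> (forall i, qs i N = 0) -> mu N = 0.

Lemma abs_cont_dominated mu nu : abs_cont G mu nu -> dominated mu (fun=> nu).
Proof. by move=> mu_nu N GN /(_ 0%N); exact: mu_nu. Qed.

Lemma dominated_abs_cont mu nu qs :
  abs_cont G mu nu -> dominated nu qs -> dominated mu qs.
Proof. by move=> mu_nu nu_qs N GN /(nu_qs N GN); exact: mu_nu. Qed.

Lemma sconv_dominated (Q : set (set T -> R)) mu :
  sconv G Q mu -> exists2 qs, (forall i, Q (qs i)) & dominated mu qs.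
Proof.
move=> [_ [c [qs [_ Qqs _ lim_mu]]]]; exists qs => // N GN qsN.
by apply: lim_partial_sums0 (lim_mu N GN) => i; rewrite qsN mulr0.
Qed.

Variable qs : nat -> set T -> R.
Hypothesis qs_prob : forall i, is_prob G (qs i).

Lemma completion_dominated mu A : dominated mu qs ->
  (forall i, completion G (qs i) A) -> completion G mu A.
Proof.
move=> dom /(@choice_null_sandwich _ _ _ qs (fun=> A))[B [N sandwich]].
(* [A] exceeds [\bigcup_i B i] only inside [C], and [C `\` \bigcup_i B i]
   lies in every [N i]. *)
have GB i : G (B i) by case: (sandwich i).
have GBN i : G (B i `|` N i) by case: (sandwich i) => ? ? _ _ _; exact: sa_setU.
pose C := \bigcap_i (B i `|` N i).
have GC : G C := sa_bigcap hG GBN.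
have GUB : G (\bigcup_i B i) := sa_bigcup hG GB.
apply/completionP; exists (\bigcup_i B i), (C `\` \bigcup_i B i); split.
- exact: GUB.
- exact: sa_setD.
- apply: dom => [|i]; first exact: sa_setD.
  case: (sandwich i) => _ GNi Ni0 _ _.
  apply: (prob_null_sub hG (qs_prob i) _ GNi _ Ni0); first exact: sa_setD.
  by move=> x [/(_ i I)[Bix|//] nBx]; exfalso; apply: nBx; exists i.
- by apply: bigcup_sub => i _; case: (sandwich i).
move=> x Ax; have [Bx|nBx] := pselect ((\bigcup_i B i) x); [left | right] => //.
by split=> // i _; case: (sandwich i) => _ _ _ _ /(_ x Ax).
Qed.

Lemma dominated_null_on_supports (S : nat -> set T) mu A :
  (forall i, G (S i)) -> (forall i, qs i (S i) = 1) ->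
  is_prob G mu -> dominated mu qs -> G A ->
  (forall i, mu (A `&` S i) = 0) -> mu A = 0.
Proof.
move=> GS qsS1 hmu dom GA null_on_S.
pose U := \bigcup_i S i.
have GAU : G (A `\` U) by apply: sa_setD => //; exact: sa_bigcup.
have GAS i : G (A `&` S i) by exact: sa_setI.
have null_off_U : mu (A `\` U) = 0.
  apply: dom => // i; apply: (prob_null_sub hG (qs_prob i) GAU (sa_setC hG (GS i))).
    by move=> x [_ nUx] Six; apply: nUx; exists i.
  by rewrite (prob_setC hG (qs_prob i) (GS i)) qsS1 subrr.
apply: (prob_null_sub hG hmu GA (sa_setU hG GAU (sa_bigcup hG GAS))).
  by move=> x Ax; have [[i _ Six]|nUx] := pselect (U x); [right; exists i | left].
have null_on_U := prob_bigcup_null hG hmu GAS null_on_S.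
by rewrite (prob_setU_null hG hmu GAU (sa_bigcup hG GAS) null_on_U).
Qed.

End domination.

Section localization.
Variables (T : Type) (R : realType) (F : set (set T)) (P Q : set (set T -> R)).
Variable S : (set T -> R) -> set T.
Hypotheses (hF : sigma_algebra setT F) (P_prob : forall p, P p -> is_prob F p).
Hypothesis hloc : pre_hahn_localization F P Q S.

Lemma localization_prob q : Q q -> is_prob F q.
Proof. by case: hloc => + _ _ _ _; apply. Qed.

Lemma localization_dominated p : P p ->
  exists2 qs, (forall i, Q (qs i)) & dominated F p qs.
Proof.
move=> Pp; case: hloc => _ _ _ _ /(_ p Pp)[mu].
move=> /sconv_dominated[qs Qqs mu_qs] p_mu.
by exists qs => //; exact: dominated_abs_cont mu_qs.
Qed.

Lemma localization_null N : F N ->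
  (forall p, P p -> p N = 0) <-> (forall q, Q q -> q N = 0).
Proof.
move=> FN; split=> [P_null q Qq|Q_null p /localization_dominated[qs Qqs]].
  by case: hloc => _ _ _ /(_ q Qq)[p Pp q_p] _; apply: q_p => //; exact: P_null.
by apply => // i; exact: Q_null.
Qed.

Lemma completion_fam_localization : completion_fam F P = completion_fam F Q.
Proof.
apply/seteqP; split=> A A_compl mu.
  move=> Qmu; case: hloc => _ _ _ /(_ mu Qmu)[p Pp mu_p] _.
  apply: (completion_dominated hF _ (abs_cont_dominated mu_p)) => _.
    exact: P_prob.
  exact: A_compl.
move=> /localization_dominated[qs Qqs mu_qs].
apply: (completion_dominated hF _ mu_qs) => i; first exact: localization_prob.
exact: A_compl.
Qed.

Let F_sub_GP : F `<=` completion_fam F P := sub_completion_fam hF P_prob.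

Definition hahn_family :=
  [set completed_measure F q (completion_fam F P) | q in Q].

Lemma hahn_family_prob r : hahn_family r -> is_prob (completion_fam F P) r.
Proof.
move=> [q Qq <-]; apply: is_prob_completed_measure => //.
- exact: localization_prob.
- exact: (sigma_algebra_completion_fam hF P_prob).
by rewrite completion_fam_localization => A; apply.
Qed.

Lemma restr_hahn_family : restr F @` hahn_family = Q.
Proof.
apply/seteqP; split=> [_ [_ [q Qq <-] <-]|q Qq].
  by rewrite restr_completed_measure //; exact: localization_prob.
exists (completed_measure F q (completion_fam F P)); first by exists q.
by rewrite restr_completed_measure //; exact: localization_prob.
Qed.

Lemma polar_hahn_family : polar F P = polar F (restr F @` hahn_family).
Proof. by rewrite restr_hahn_family; apply: eq_polar; exact: localization_null. Qed.

Lemma completion_fam_hahn_family :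
  completion_fam F hahn_family = completion_fam F P.
Proof.
rewrite completion_fam_localization; apply/seteqP; split=> A A_compl.
  move=> q Qq; rewrite -(completion_completed_measure hF (localization_prob Qq) F_sub_GP).
  by apply: A_compl; exists q.
move=> _ [q Qq <-].
rewrite completion_completed_measure //; first exact: A_compl.
exact: localization_prob.
Qed.

Lemma hahn_supports r : hahn_family r ->
  completion_fam F P (S (restr F r)) /\ r (S (restr F r)) = 1.
Proof.
case: hloc => _ QS QS1 _ _ [q Qq <-].
rewrite restr_completed_measure //; last exact: localization_prob.
split; first exact/F_sub_GP/QS.
rewrite completed_measure_meas // ?QS1 ?asboolT //; first exact: localization_prob.
exact: QS.
Qed.

Lemma hahn_supports_disjoint :
  (forall q r, Q q -> Q r -> q <> r -> S q `&` S r = set0) ->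
  forall r r', hahn_family r -> hahn_family r' -> r <> r' ->
  S (restr F r) `&` S (restr F r') = set0.
Proof.
move=> S_disj _ _ [q Qq <-] [q' Qq' <-] neq.
rewrite !restr_completed_measure //; try exact: localization_prob.
by apply: S_disj => // eq_q; apply: neq; rewrite eq_q.
Qed.

Lemma hahn_null A p : F A -> P p ->
  (forall r, hahn_family r -> completed_value F p (A `&` S (restr F r)) 0) ->
  p A = 0.
Proof.
move=> FA Pp null_on; have [qs Qqs dom] := localization_dominated Pp.
case: hloc => _ QS QS1 _ _.
apply: (@dominated_null_on_supports _ _ _ hF qs _ (S \o qs) _ _ _ _ (P_prob Pp) dom FA).
- by move=> i; exact: localization_prob.
- by move=> i; exact: QS.
- by move=> i /=; rewrite QS1 ?asboolT.
move=> i; have FAS : F (A `&` S (qs i)) by apply: sa_setI => //; exact: QS.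
apply: (completed_value_unique hF (P_prob Pp) (completed_value_meas hF (P_prob Pp) FAS)).
have := null_on _ (ex_intro2 _ _ (qs i) (Qqs i) erefl).
by rewrite restr_completed_measure //; exact: localization_prob.
Qed.

End localization.

Theorem lemma3p13 (T : Type) (R : realType) (F : set (set T))
    (P : set (set T -> R)) :
  sigma_algebra setT F ->
  (forall p, P p -> is_prob F p) ->
  (exists (Q : set (set T -> R)) (S : (set T -> R) -> set T),
      pre_hahn_localization F P Q S /\
      (forall q r, Q q -> Q r -> q <> r -> S q `&` S r = set0)) ->
  hahn_property F P.
Proof.
move=> hF P_prob [Q [S [hloc S_disj]]].
(* [restr F] undoes the extension of each [q] in [Q], so [W r] is the support
   of the [q] that [r] extends. *)
exists (hahn_family F P Q), (fun r => S (restr F r)); split.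
- exact: (hahn_family_prob hF P_prob hloc).
- split; first exact: (polar_hahn_family hF P_prob hloc).
  by move=> f; rewrite (completion_fam_hahn_family hF P_prob hloc).
- split; first exact: (hahn_supports hF P_prob hloc).
  exact: (hahn_supports_disjoint hF P_prob hloc S_disj).
- exact: (hahn_null hF P_prob hloc).
Qed.
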